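(* Let $F\colon\mathcal{A}\to\mathcal{B}$ be a functor between locally finitely presentable categories that preserves monomorphisms. Then $F$ is finitely bounded if and only if $F$ preserves colimits of filtered diagrams of monomorphisms.
   Context: An object $A$ is finitely presentable if $\mathcal{A}(A,-)$ preserves filtered colimits, and finitely generated if $\mathcal{A}(A,-)$ preserves colimits of filtered diagrams of monomorphisms (filtered diagrams $D$ with $Dh$ monic for every morphism $h$ of the scheme). A category is locally finitely presentable if it is cocomplete, has (up to isomorphism) only a set of finitely presentable objects, and every object is a filtered colimit of finitely presentable objects. A functor $F\colon\mathcal{A}\to\mathcal{B}$ is finitely bounded if for every object $A$ and every monomorphism $m_0\colon M_0\rightarrowtail FA$ with $M_0$ finitely generated there exist a monomorphism $m\colon M\rightarrowtail A$ with $M$ finitely generated and $g\colon M_0\to FM$ with $m_0=Fm\cdot g$. *)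

From Stdlib Require Import FunctionalExtensionality.

Set Universe Polymorphism.
Set Implicit Arguments.
Unset Strict Implicit.

(* A category whose objects live in universe o and whose hom-types live in
   universe h.  "Small" means: objects and homs both in the hom-universe h of
   the (locally small) categories under consideration. *)
Cumulative Record Category@{o h} := {
  Ob :> Type@{o};
  Hom : Ob -> Ob -> Type@{h};
  idm : forall a, Hom a a;
  comp : forall a b c, Hom b c -> Hom a b -> Hom a c;
  comp_id_l : forall a b (f : Hom a b), comp (idm b) f = f;
  comp_id_r : forall a b (f : Hom a b), comp f (idm a) = f;
  comp_assoc : forall a b c d (f : Hom c d) (g : Hom b c) (k : Hom a b),
      comp f (comp g k) = comp (comp f g) k
}.
Arguments Hom {C} a b : rename.
Arguments idm {C} a : rename.
Arguments comp {C a b c} f g : rename.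

Record Functor (C D : Category) := {
  fobj :> Ob C -> Ob D;
  fmap : forall a b, Hom a b -> Hom (fobj a) (fobj b);
  fmap_id : forall a, fmap (idm a) = idm (fobj a);
  fmap_comp : forall a b c (f : Hom b c) (g : Hom a b),
      fmap (comp f g) = comp (fmap f) (fmap g)
}.
Arguments fmap {C D} F {a b} f : rename.

Definition FComp (C D E : Category) (G : Functor D E) (F : Functor C D)
  : Functor C E.
Proof.
  refine {| fobj := fun a => G (F a);
            fmap := fun a b f => fmap G (fmap F f) |}.
  - intros a. rewrite fmap_id. apply fmap_id.
  - intros a b c f g. rewrite fmap_comp. apply fmap_comp.
Defined.

Definition TypeCat@{h h'| h < h' +} : Category@{h' h} :=
  {| Ob := (Type@{h} : Type@{h'}); Hom := fun X Y : Type@{h} => X -> Y;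
     idm := fun (X : Type@{h}) (x : X) => x;
     comp := fun (X Y Z : Type@{h}) (f : Y -> Z) (g : X -> Y) (x : X) => f (g x);
     comp_id_l := fun X Y f => eq_refl;
     comp_id_r := fun X Y f => eq_refl;
     comp_assoc := fun X Y Z W f g k => eq_refl |}.

Definition Mono (C : Category) (a b : C) (f : Hom a b) : Prop :=
  forall x (g g' : Hom x a), comp f g = comp f g' -> g = g'.

Definition Iso (C : Category) (a b : C) : Prop :=
  exists (f : Hom a b) (g : Hom b a), comp g f = idm a /\ comp f g = idm b.

Definition Cocone (J C : Category) (D : Functor J C) (c : C) : Type :=
  { leg : forall j, Hom (D j) c |
    forall j k (u : Hom j k), comp (leg k) (fmap D u) = leg j }.

Definition leg (J C : Category) (D : Functor J C) (c : C) (l : Cocone D c)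
  : forall j, Hom (D j) c := proj1_sig l.

Definition IsColimit (J C : Category) (D : Functor J C) (c : C)
    (l : Cocone D c) : Prop :=
  forall (c' : C) (l' : Cocone D c'),
    (exists m : Hom c c', forall j, comp m (leg l j) = leg l' j) /\
    (forall m m' : Hom c c',
        (forall j, comp m (leg l j) = leg l' j) ->
        (forall j, comp m' (leg l j) = leg l' j) -> m = m').

Definition map_cocone (J C E : Category) (D : Functor J C) (F : Functor C E)
    (c : C) (l : Cocone D c) : Cocone (FComp F D) (F c).
Proof.
  exists (fun j => fmap F (leg l j)).
  intros j k u. simpl. rewrite <- fmap_comp. f_equal. apply (proj2_sig l).
Defined.

Definition PreservesColimitsOf (J C E : Category) (D : Functor J C)
    (F : Functor C E) : Prop :=
  forall (c : C) (l : Cocone D c), IsColimit l -> IsColimit (map_cocone F l).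

Definition Filtered (J : Category) : Prop :=
  inhabited (Ob J) /\
  (forall j k : J, exists (l : J) (u : Hom j l) (v : Hom k l), True) /\
  (forall (j k : J) (u v : Hom j k), exists (l : J) (w : Hom k l),
      comp w u = comp w v).

Definition MonoDiagram (J C : Category) (D : Functor J C) : Prop :=
  forall j k (u : Hom j k), Mono (fmap D u).

Definition HomFunctor@{o h h'| h < h' +} (C : Category@{o h}) (a : C)
  : Functor@{o h h' h} C TypeCat@{h h'}.
Proof.
  refine {| fobj := fun b => (Hom a b : Ob TypeCat@{h h'});
            fmap := fun b c (f : Hom b c) => (fun g : Hom a b => comp f g)
                    : Hom (C:=TypeCat@{h h'}) (Hom a b) (Hom a c) |}.
  - intros b. apply functional_extensionality. intro g. apply comp_id_l.
  - intros b c d f g. apply functional_extensionality. intro k.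
    simpl. symmetry. apply comp_assoc.
Defined.

Definition FinPres@{o h h'| h < h' +} (C : Category@{o h}) (a : C) : Prop :=
  forall (J : Category@{h h}) (D : Functor J C),
    Filtered J -> PreservesColimitsOf D (HomFunctor@{o h h'} a).

Definition FinGen@{o h h'| h < h' +} (C : Category@{o h}) (a : C) : Prop :=
  forall (J : Category@{h h}) (D : Functor J C),
    Filtered J -> MonoDiagram D -> PreservesColimitsOf D (HomFunctor@{o h h'} a).

Definition Cocomplete@{o h} (C : Category@{o h}) : Prop :=
  forall (J : Category@{h h}) (D : Functor J C),
    exists (c : C) (l : Cocone D c), IsColimit l.

Definition LocallyFinPres@{o h h'| h < h' +} (C : Category@{o h}) : Prop :=
  Cocomplete C /\
  (exists (I : Type@{h}) (P : I -> Ob C),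
      (forall i, FinPres@{o h h'} (P i)) /\
      (forall a : C, FinPres@{o h h'} a -> exists i, Iso (P i) a)) /\
  (forall a : C, exists (J : Category@{h h}) (D : Functor J C),
      Filtered J /\ (forall j, FinPres@{o h h'} (D j)) /\
      exists l : Cocone D a, IsColimit l).

Definition PreservesMonos (C E : Category) (F : Functor C E) : Prop :=
  forall a b (f : Hom a b), Mono f -> Mono (fmap F f).

Definition FinitelyBounded@{o1 o2 h h'| h < h' +}
    (C : Category@{o1 h}) (E : Category@{o2 h}) (F : Functor C E) : Prop :=
  forall (a : C) (M0 : E) (m0 : Hom M0 (F a)),
    Mono m0 -> FinGen@{o2 h h'} M0 ->
    exists (M : C) (m : Hom M a),
      Mono m /\ FinGen@{o1 h h'} M /\
      exists g : Hom M0 (F M), m0 = comp (fmap F m) g.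

From Stdlib Require Import FunctionalExtensionality ClassicalEpsilon Classical PeanoNat.

Set Universe Polymorphism.
Set Implicit Arguments.
Unset Strict Implicit.

(* In a locally finitely presentable category, the image of a morphism
   [q : Q -> b] is the colimit of the chain Q -> Q1 -> Q2 -> ... in which each
   step coequalizes all pairs of maps out of finitely presentable objects that
   are identified in [b]; an infinite chain is needed because every step
   creates new such pairs.  This gives a strong epi followed by a mono, whose
   middle object is finitely generated when [Q] is finitely presentable.
   Taking images of a filtered diagram of finitely presentable objects then
   writes every object as a filtered union of finitely generated subobjects.

   If F preserves filtered unions, a finitely generated subobject of F A
   factors through F of one of these subobjects, which is boundedness.
   Conversely, for a filtered diagram of monos with colimit C the cocone F C
   has monic legs, and every map from a finitely presentable object into F C
   factors through one of them: its image is finitely generated, boundedness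
   moves it into F N for a finitely generated subobject N of C, and N lies in
   one member of the diagram.  In a locally finitely presentable category a
   monic cocone with this covering property is a colimit. *)

Definition mk_cocone (J C : Category) (D : Functor J C) (c : C)
    (t : forall j, Hom (D j) c)
    (Ht : forall j k (u : Hom j k), comp (t k) (fmap D u) = t j) : Cocone D c :=
  exist _ t Ht.
Arguments mk_cocone {J C D c} t Ht.

Lemma leg_natural (J C : Category) (D : Functor J C) (c : C) (l : Cocone D c)
    j k (u : Hom j k) :
  comp (leg l k) (fmap D u) = leg l j.
Proof. exact (proj2_sig l j k u). Qed.

Lemma colimit_hom_ext (J C : Category) (D : Functor J C) (c : C) (l : Cocone D c) :
  IsColimit l -> forall y (f g : Hom c y),
  (forall j, comp f (leg l j) = comp g (leg l j)) -> f = g.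
Proof.
  intros Hl y f g H.
  unshelve refine (proj2 (Hl y (mk_cocone (fun j => comp g (leg l j)) _)) f g H
                     (fun j => eq_refl)).
  intros j k u. simpl. rewrite <- comp_assoc, leg_natural. reflexivity.
Qed.

Lemma colimit_desc (J C : Category) (D : Functor J C) (c : C) (l : Cocone D c) :
  IsColimit l -> forall y (t : forall j, Hom (D j) y),
  (forall j k (u : Hom j k), comp (t k) (fmap D u) = t j) ->
  exists m : Hom c y, forall j, comp m (leg l j) = t j.
Proof. intros Hl y t Ht. exact (proj1 (Hl y (mk_cocone t Ht))). Qed.

Lemma filtered_bound (J : Category) :
  Filtered J -> forall j k : J, exists l (u : Hom j l) (v : Hom k l), True.
Proof. intros [_ [H _]]; exact H. Qed.

Lemma filtered_coequalize (J : Category) :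
  Filtered J -> forall (j k : J) (u v : Hom j k),
  exists l (w : Hom k l), comp w u = comp w v.
Proof. intros [_ [_ H]]; exact H. Qed.

Definition indicator (P : Prop) : bool :=
  if excluded_middle_informative P then true else false.

Lemma indicator_true (P : Prop) : indicator P = true <-> P.
Proof.
  unfold indicator. destruct (excluded_middle_informative P); split; auto.
  discriminate.
Qed.

Lemma indicator_iff (P Q : Prop) : (P <-> Q) -> indicator P = indicator Q.
Proof.
  intro H. unfold indicator.
  destruct (excluded_middle_informative P), (excluded_middle_informative Q); tauto.
Qed.

Section TypeColimits.
Universes h h'.
Constraint h < h'.
Context (J : Category@{h h}) (X : Functor J TypeCat@{h h'}).

Lemma fmap_comp_apply j k l (u : Hom k l) (v : Hom j k) (x : X j) :
  fmap X (comp u v) x = fmap X u (fmap X v x).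
Proof. rewrite fmap_comp. reflexivity. Qed.

Definition EventuallyEq j k (x : X j) (y : X k) : Prop :=
  exists m (u : Hom j m) (v : Hom k m), fmap X u x = fmap X v y.

Lemma eventually_eq_fmap_r (HF : Filtered J) j k k' (w : Hom k k')
    (x : X j) (y : X k) :
  EventuallyEq x (fmap X w y) <-> EventuallyEq x y.
Proof.
  split.
  - intros [m [u [v E]]]. exists m, u, (comp v w).
    rewrite E, fmap_comp_apply. reflexivity.
  - intros [m [u [v E]]].
    destruct (filtered_bound HF m k') as [m2 [p [r _]]].
    destruct (filtered_coequalize HF (comp p v) (comp r w)) as [m3 [s Es]].
    exists m3, (comp s (comp p u)), (comp s r).
    rewrite <- fmap_comp_apply, comp_assoc, fmap_comp_apply, E.
    rewrite <- !fmap_comp_apply, <- !comp_assoc, Es. reflexivity.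
Qed.

Context (S : TypeCat@{h h'}) (sigma : Cocone X S).

Lemma type_colimit_surj :
  IsColimit sigma -> forall s : S, exists j (x : X j), leg sigma j x = s.
Proof.
  intros Hs s.
  (* the constant cocone [true] has two mediating maps unless [sigma] is onto *)
  pose (tau := @mk_cocone _ _ X (bool : TypeCat@{h h'}) (fun j (_ : X j) => true)
                 (fun j k u => eq_refl)).
  assert (E : (fun _ : S => true)
              = (fun s => indicator (exists j (x : X j), leg sigma j x = s))).
  { apply (proj2 (Hs _ tau)); intro j; apply functional_extensionality; intro x.
    - reflexivity.
    - simpl. apply indicator_true. exists j, x. reflexivity. }
  apply indicator_true. exact (eq_sym (f_equal (fun phi => phi s) E)).
Qed.

Lemma type_colimit_eventually_eq :
  Filtered J -> IsColimit sigma ->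
  forall j k (x : X j) (y : X k), leg sigma j x = leg sigma k y -> EventuallyEq x y.
Proof.
  intros HF Hs j k x y E.
  (* being eventually equal to [x] is a cocone into [bool] *)
  unshelve epose (tau := @mk_cocone _ _ X (bool : TypeCat@{h h'})
                 (fun k (y : X k) => indicator (EventuallyEq x y)) _).
  { intros k1 k2 w. apply functional_extensionality. intro z.
    exact (indicator_iff (eventually_eq_fmap_r HF w x z)). }
  destruct (proj1 (Hs _ tau)) as [phi Hphi].
  apply indicator_true.
  transitivity (phi (leg sigma k y)); [exact (eq_sym (f_equal (fun f => f y) (Hphi k)))|].
  rewrite <- E. transitivity (indicator (EventuallyEq x x));
    [exact (f_equal (fun f => f x) (Hphi j))|].
  apply indicator_true. exists j, (idm j), (idm j). reflexivity.
Qed.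

Lemma type_colimit_of_eventually_eq :
  (forall s : S, exists j (x : X j), leg sigma j x = s) ->
  (forall j k (x : X j) (y : X k), leg sigma j x = leg sigma k y -> EventuallyEq x y) ->
  IsColimit sigma.
Proof.
  intros Hsurj Heq Y tau.
  assert (Hrep : forall s, exists p : {j : J & X j}, leg sigma (projT1 p) (projT2 p) = s).
  { intro s. destruct (Hsurj s) as [j [x E]]. exists (existT _ j x). exact E. }
  pose (rep := fun s => proj1_sig (constructive_indefinite_description _ (Hrep s))).
  assert (Hrep_spec : forall s, leg sigma (projT1 (rep s)) (projT2 (rep s)) = s).
  { intro s. exact (proj2_sig (constructive_indefinite_description _ (Hrep s))). }
  assert (Htau : forall j k (x : X j) (y : X k),
             leg sigma j x = leg sigma k y -> leg tau j x = leg tau k y).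
  { intros j k x y E. destruct (Heq _ _ x y E) as [m [u [v Euv]]].
    rewrite <- (f_equal (fun f => f x) (leg_natural tau u)),
            <- (f_equal (fun f => f y) (leg_natural tau v)).
    simpl. rewrite Euv. reflexivity. }
  split.
  - exists (fun s => leg tau (projT1 (rep s)) (projT2 (rep s))).
    intro j. apply functional_extensionality. intro x. simpl.
    apply Htau. rewrite Hrep_spec. reflexivity.
  - intros m m' H1 H2. apply functional_extensionality. intro s.
    destruct (Hsurj s) as [j [x <-]].
    exact (eq_trans (f_equal (fun f => f x) (H1 j))
                    (eq_sym (f_equal (fun f => f x) (H2 j)))).
Qed.

End TypeColimits.

Section HomColimits.
Universes o h h'.
Constraint h < h'.
Context (C : Category@{o h}) (a : C) (J : Category@{h h}) (D : Functor J C)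
  (c : C) (l : Cocone D c).

Lemma hom_colimit_factor :
  IsColimit (map_cocone (HomFunctor@{o h h'} a) l) ->
  forall f : Hom a c, exists j (g : Hom a (D j)), comp (leg l j) g = f.
Proof. intros H f. exact (type_colimit_surj H f). Qed.

Lemma hom_colimit_eventually_eq :
  Filtered J -> IsColimit (map_cocone (HomFunctor@{o h h'} a) l) ->
  forall j k (g : Hom a (D j)) (g' : Hom a (D k)),
  comp (leg l j) g = comp (leg l k) g' ->
  exists m (u : Hom j m) (v : Hom k m), comp (fmap D u) g = comp (fmap D v) g'.
Proof. intros HF H j k g g' E. exact (type_colimit_eventually_eq HF H E). Qed.

Lemma hom_colimit_of_mono_legs :
  Filtered J -> (forall j, Mono (leg l j)) ->
  (forall f : Hom a c, exists j (g : Hom a (D j)), comp (leg l j) g = f) ->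
  IsColimit (map_cocone (HomFunctor@{o h h'} a) l).
Proof.
  intros HF Hmono Hsurj.
  apply type_colimit_of_eventually_eq; [exact Hsurj|].
  intros j k g g' E. destruct (filtered_bound HF j k) as [m [u [v _]]].
  exists m, u, v. apply (Hmono m). simpl. rewrite !comp_assoc, !leg_natural. exact E.
Qed.

End HomColimits.

Section FiniteObjects.
Universes o h h'.
Constraint h < h'.
Context (C : Category@{o h}).

Lemma finpres_factor (a : C) : FinPres@{o h h'} a ->
  forall (J : Category@{h h}) (D : Functor J C) (c : C) (l : Cocone D c),
  Filtered J -> IsColimit l ->
  forall f : Hom a c, exists j (g : Hom a (D j)), comp (leg l j) g = f.
Proof. intros Ha J D c l HF Hl. exact (hom_colimit_factor (Ha J D HF c l Hl)). Qed.

Lemma finpres_factor2 (a : C) : FinPres@{o h h'} a ->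
  forall (J : Category@{h h}) (D : Functor J C) (c : C) (l : Cocone D c),
  Filtered J -> IsColimit l ->
  forall f f' : Hom a c, exists j (g g' : Hom a (D j)),
    comp (leg l j) g = f /\ comp (leg l j) g' = f'.
Proof.
  intros Ha J D c l HF Hl f f'.
  destruct (finpres_factor Ha HF Hl f) as [j [g <-]].
  destruct (finpres_factor Ha HF Hl f') as [j' [g' <-]].
  destruct (filtered_bound HF j j') as [m [u [v _]]].
  exists m, (comp (fmap D u) g), (comp (fmap D v) g').
  rewrite !comp_assoc, !leg_natural. split; reflexivity.
Qed.

Lemma fingen_factor (a : C) : FinGen@{o h h'} a ->
  forall (J : Category@{h h}) (D : Functor J C) (c : C) (l : Cocone D c),
  Filtered J -> MonoDiagram D -> IsColimit l ->
  forall f : Hom a c, exists j (g : Hom a (D j)), comp (leg l j) g = f.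
Proof. intros Ha J D c l HF HM Hl. exact (hom_colimit_factor (Ha J D HF HM c l Hl)). Qed.

Hypothesis HC : LocallyFinPres@{o h h'} C.

Lemma lfp_hom_ext (x y : C) (f g : Hom x y) :
  (forall a (t : Hom a x), FinPres@{o h h'} a -> comp f t = comp g t) -> f = g.
Proof.
  intro H. destruct HC as [_ [_ Hdec]].
  destruct (Hdec x) as [J [D [_ [Hfp [l Hl]]]]].
  apply (colimit_hom_ext Hl). intro j. apply H, Hfp.
Qed.

Lemma lfp_mono (y b : C) (m : Hom y b) :
  (forall a (g g' : Hom a y), FinPres@{o h h'} a -> comp m g = comp m g' -> g = g') ->
  Mono m.
Proof.
  intros H x g g' E. apply lfp_hom_ext. intros a t Ha.
  apply H; [exact Ha|]. rewrite !comp_assoc, E. reflexivity.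
Qed.

Lemma filtered_mono_colimit_legs_mono (J : Category@{h h}) (D : Functor J C)
    (c : C) (l : Cocone D c) :
  Filtered J -> MonoDiagram D -> IsColimit l -> forall j, Mono (leg l j).
Proof.
  intros HF HM Hl j. apply lfp_mono. intros a g g' Ha E.
  destruct (hom_colimit_eventually_eq HF (Ha J D HF c l Hl) E) as [m [u [v Euv]]].
  destruct (filtered_coequalize HF u v) as [m' [w Ew]].
  apply (HM _ _ (comp w u)).
  rewrite fmap_comp, <- !comp_assoc, Euv, !comp_assoc, <- !fmap_comp, Ew. reflexivity.
Qed.

End FiniteObjects.

Definition Epi (C : Category) (a b : C) (f : Hom a b) : Prop :=
  forall z (g g' : Hom b z), comp g f = comp g' f -> g = g'.

Definition StrongEpi (C : Category) (a b : C) (e : Hom a b) : Prop :=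
  Epi e /\
  forall (x z : C) (g : Hom a x) (n : Hom x z) (h : Hom b z),
    Mono n -> comp n g = comp h e ->
    exists d : Hom b x, comp d e = g /\ comp n d = h.

Lemma epi_comp (C : Category) (a b c : C) (f : Hom a b) (g : Hom b c) :
  Epi f -> Epi g -> Epi (comp g f).
Proof.
  intros Hf Hg z k k' E. apply Hg, Hf. rewrite <- !comp_assoc. exact E.
Qed.

Lemma mono_of_comp_mono (C : Category) (a b c : C) (f : Hom a b) (g : Hom b c) :
  Mono (comp g f) -> Mono f.
Proof.
  intros H x k k' E. apply H. rewrite <- !comp_assoc, E. reflexivity.
Qed.

Lemma sig_eq (A : Type) (P : A -> Prop) (x y : {z : A | P z}) :
  proj1_sig x = proj1_sig y -> x = y.
Proof.
  destruct x as [x px], y as [y py]; simpl; intros <-.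
  f_equal. apply proof_irrelevance.
Qed.

Section InducedCategory.
Local Unset Implicit Arguments.
Universes o h.
Context (C : Category@{o h}) (O : Type@{h}) (X : O -> C)
  (P : forall i j, Hom (X i) (X j) -> Prop)
  (P_id : forall i, P i i (idm (X i)))
  (P_comp : forall i j k (f : Hom (X j) (X k)) (g : Hom (X i) (X j)),
      P j k f -> P i j g -> P i k (comp f g)).

Definition InducedCat : Category@{h h}.
Proof.
  refine {| Ob := O; Hom := fun i j => {f : Hom (X i) (X j) | P i j f};
            idm := fun i => exist _ (idm (X i)) (P_id i);
            comp := fun i j k f g =>
              exist _ (comp (proj1_sig f) (proj1_sig g))
                (P_comp i j k _ _ (proj2_sig f) (proj2_sig g)) |};
    intros; apply sig_eq; simpl.
  - apply comp_id_l.
  - apply comp_id_r.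
  - apply comp_assoc.
Defined.

Definition InducedFunctor : Functor InducedCat C :=
  @Build_Functor InducedCat C X (fun i j f => proj1_sig f)
    (fun i => eq_refl) (fun i j k f g => eq_refl).

Lemma induced_filtered :
  inhabited O ->
  (forall i j, exists k (f : Hom (X i) (X k)) (g : Hom (X j) (X k)), P i k f /\ P j k g) ->
  (forall i j (f g : Hom (X i) (X j)), P i j f -> P i j g -> f = g) ->
  Filtered InducedCat.
Proof.
  intros Hinh Hbound Hthin. split; [exact Hinh|split].
  - intros i j. destruct (Hbound i j) as [k [f [g [Hf Hg]]]].
    exists k, (exist _ f Hf), (exist _ g Hg). exact I.
  - intros i j u v. exists j, (idm (C:=InducedCat) j).
    f_equal. apply sig_eq, Hthin; [exact (proj2_sig u)|exact (proj2_sig v)].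
Qed.

End InducedCategory.

Section MultiCoequalizer.
Local Unset Implicit Arguments.
Universes o h.
Context (C : Category@{o h}) (S : Type@{h}) (X : S -> C) (y : C)
  (al be : forall s, Hom (X s) y).

Definition pairs_obj (a : option S) : C :=
  match a with Some s => X s | None => y end.

(* The morphisms between two sources only make this a category; they impose
   no condition on cocones. *)
Definition pairs_hom (a b : option S) : Hom (pairs_obj a) (pairs_obj b) -> Prop :=
  match a as a0, b as b0 return Hom (pairs_obj a0) (pairs_obj b0) -> Prop with
  | None, None => fun f => f = idm y
  | Some s, None => fun f => f = al s \/ f = be s
  | None, Some _ => fun _ => False
  | Some s, Some t => fun f => comp (al t) f = al s /\ comp (be t) f = be s
  end.

Lemma pairs_hom_id (a : option S) : pairs_hom a a (idm (pairs_obj a)).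
Proof. destruct a; simpl; [split|]; auto using comp_id_r. Qed.

Lemma pairs_hom_comp (a b c : option S) f g :
  pairs_hom b c f -> pairs_hom a b g -> pairs_hom a c (comp f g).
Proof.
  destruct a as [s|], b as [t|], c as [u|]; simpl; try tauto.
  - intros [Hf1 Hf2] [Hg1 Hg2].
    rewrite !comp_assoc, Hf1, Hf2. auto.
  - intros [-> | ->] [Hg1 Hg2]; auto.
  - intros -> Hg. rewrite comp_id_l. exact Hg.
  - intros -> ->. apply comp_id_l.
Qed.

Definition ParallelPairs : Category :=
  InducedCat C (option S) pairs_obj pairs_hom pairs_hom_id pairs_hom_comp.
Definition PairsDiagram : Functor ParallelPairs C :=
  InducedFunctor C (option S) pairs_obj pairs_hom pairs_hom_id pairs_hom_comp.

Lemma multi_coequalizer : Cocomplete@{o h} C ->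
  exists y' (c : Hom y y'),
    (forall s, comp c (al s) = comp c (be s)) /\ Epi c /\
    (forall z (f : Hom y z), (forall s, comp f (al s) = comp f (be s)) ->
       exists f' : Hom y' z, comp f' c = f).
Proof.
  intro Hc.
  destruct (Hc ParallelPairs PairsDiagram) as [y' [l Hl]].
  pose (c := leg l None : Hom y y').
  assert (Hal : forall s, comp c (al s) = leg l (Some s)).
  { intro s. exact (leg_natural l (exist _ (al s) (or_introl eq_refl)
                                   : @Hom ParallelPairs (Some s) None)). }
  assert (Hbe : forall s, comp c (be s) = leg l (Some s)).
  { intro s. exact (leg_natural l (exist _ (be s) (or_intror eq_refl)
                                   : @Hom ParallelPairs (Some s) None)). }
  exists y', c. split; [|split].
  - intro s. rewrite Hal, Hbe. reflexivity.
  - intros z f1 f2 E. apply (colimit_hom_ext Hl). intros [s|]; [|exact E].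
    rewrite <- Hal, !comp_assoc, E. reflexivity.
  - intros z f Hf.
    destruct (colimit_desc Hl (t := fun a => match a return Hom (pairs_obj a) z with
                                    | None => f | Some s => comp f (al s) end))
      as [m Hm].
    + intros [s|] [t|] [u Hu]; simpl in *.
      * rewrite <- comp_assoc, (proj1 Hu). reflexivity.
      * destruct Hu as [-> | ->]; [reflexivity|symmetry; apply Hf].
      * contradiction.
      * subst u. apply comp_id_r.
    + exists m. exact (Hm None).
Qed.

End MultiCoequalizer.
Arguments multi_coequalizer {C S X y} al be _.

Section KernelQuotient.
Universes o h h'.
Constraint h < h'.
Context (C : Category@{o h}).

Definition FpIdentifies (y b z : C) (m : Hom y b) (f : Hom y z) : Prop :=
  forall (x : C) (g g' : Hom x y), FinPres@{o h h'} x ->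
    comp m g = comp m g' -> comp f g = comp f g'.

Record FpKernelQuotient (y y' b : C) (m : Hom y b) (c : Hom y y') (m' : Hom y' b)
  : Prop := {
  kq_factor : comp m' c = m;
  kq_epi : Epi c;
  kq_identifies : FpIdentifies m c;
  kq_universal : forall z (f : Hom y z), FpIdentifies m f ->
                   exists f' : Hom y' z, comp f' c = f
}.

Lemma fp_kernel_quotient_exists : LocallyFinPres@{o h h'} C ->
  forall (y b : C) (m : Hom y b),
  exists y' (c : Hom y y') (m' : Hom y' b), FpKernelQuotient m c m'.
Proof.
  intros [Hcoc [[I [P [HP Hrep]]] _]] y b m.
  pose (S := {i : I & {g : Hom (P i) y & {g' : Hom (P i) y | comp m g = comp m g'}}}).
  pose (al := fun s : S => projT1 (projT2 s)).
  pose (be := fun s : S => proj1_sig (projT2 (projT2 s))).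
  assert (Hpairs : forall z (f : Hom y z),
             FpIdentifies m f <-> forall s, comp f (al s) = comp f (be s)).
  { intros z f. split.
    - intros Hf [i [g [g' E]]]. exact (Hf _ g g' (HP i) E).
    - intros Hf x g g' Hx E.
      destruct (Hrep x Hx) as [i [phi [psi [_ Hpsi]]]].
      assert (Ei : comp m (comp g phi) = comp m (comp g' phi))
        by (rewrite !comp_assoc, E; reflexivity).
      assert (Ef := Hf (existT _ i (existT _ (comp g phi) (exist _ (comp g' phi) Ei)))).
      simpl in Ef. unfold al, be in Ef; simpl in Ef.
      rewrite <- (comp_id_r g), <- (comp_id_r g'), <- Hpsi, !comp_assoc.
      rewrite <- (comp_assoc f g phi), <- (comp_assoc f g' phi), Ef. reflexivity. }
  destruct (multi_coequalizer al be Hcoc) as [y' [c [Hc [Hepi Huniv]]]].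
  destruct (Huniv b m) as [m' Hm'].
  { intros [i [g [g' E]]]. exact E. }
  exists y', c, m'. split.
  - exact Hm'.
  - exact Hepi.
  - apply Hpairs. exact Hc.
  - intros z f Hf. apply Huniv, Hpairs, Hf.
Qed.

End KernelQuotient.

Section KernelChain.
Universes o h h'.
Constraint h < h'.
Context (C : Category@{o h}) (HC : LocallyFinPres@{o h h'} C) (b : C)
  (M : nat -> C) (mm : forall n, Hom (M n) b) (cc : forall n, Hom (M n) (M (S n))).
Hypothesis chain_kq : forall n, FpKernelQuotient@{o h h'} (mm n) (cc n) (mm (S n)).

Fixpoint from_base (n : nat) : Hom (M 0) (M n) :=
  match n return Hom (M 0) (M n) with
  | 0 => idm (M 0)
  | S n => comp (cc n) (from_base n)
  end.

Lemma from_base_epi n : Epi (from_base n).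
Proof.
  induction n as [|n IH]; simpl.
  - intros z g g' E. rewrite !comp_id_r in E. exact E.
  - exact (epi_comp IH (kq_epi (chain_kq n))).
Qed.

Definition coslice_hom (i j : nat) (f : Hom (M i) (M j)) : Prop :=
  comp f (from_base i) = from_base j.
Arguments coslice_hom : clear implicits.

Lemma coslice_hom_id i : coslice_hom i i (idm (M i)).
Proof. apply comp_id_l. Qed.

Lemma coslice_hom_comp i j k (f : Hom (M j) (M k)) (g : Hom (M i) (M j)) :
  coslice_hom j k f -> coslice_hom i j g -> coslice_hom i k (comp f g).
Proof. unfold coslice_hom. intros Hf Hg. rewrite <- comp_assoc, Hg. exact Hf. Qed.

(* Indexing the chain by the maps under [M 0], which are unique since every
   [from_base n] is epi, gives a thin filtered category without transport along
   [i <= j]. *)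
Definition ChainCat : Category :=
  InducedCat C nat M coslice_hom coslice_hom_id coslice_hom_comp.
Definition ChainDiagram : Functor ChainCat C :=
  InducedFunctor C nat M coslice_hom coslice_hom_id coslice_hom_comp.

Lemma coslice_hom_exists i j : i <= j -> exists f, coslice_hom i j f.
Proof.
  induction 1 as [|j _ [f Hf]].
  - exists (idm (M i)). apply coslice_hom_id.
  - exists (comp (cc j) f). unfold coslice_hom in *.
    rewrite <- comp_assoc, Hf. reflexivity.
Qed.

Lemma chain_filtered : Filtered ChainCat.
Proof.
  apply induced_filtered.
  - constructor. exact 0.
  - intros i j.
    destruct (coslice_hom_exists (Nat.le_max_l i j)) as [f Hf].
    destruct (coslice_hom_exists (Nat.le_max_r i j)) as [g Hg].
    exists (Nat.max i j), f, g. split; assumption.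
  - intros i j f g Hf Hg. apply (from_base_epi (n:=i)).
    unfold coslice_hom in *. rewrite Hf, Hg. reflexivity.
Qed.

Context (L : C) (t : Cocone ChainDiagram L).
Hypothesis Ht : IsColimit t.

Lemma chain_leg_step n : comp (leg t (S n) : Hom (M (S n)) L) (cc n) = leg t n.
Proof. exact (leg_natural t (exist _ (cc n) eq_refl : Hom (C:=ChainCat) n (S n))). Qed.

Lemma chain_leg_base n : comp (leg t n : Hom (M n) L) (from_base n) = leg t 0.
Proof.
  exact (leg_natural t (exist _ (from_base n) (comp_id_r _) : Hom (C:=ChainCat) 0 n)).
Qed.

Lemma chain_desc z (f : forall n, Hom (M n) z) :
  (forall n, comp (f (S n)) (cc n) = f n) ->
  exists g : Hom L z, forall n, comp g (leg t n) = f n.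
Proof.
  intro Hf.
  assert (Hbase : forall n, comp (f n) (from_base n) = f 0).
  { induction n as [|n IH]; simpl; [apply comp_id_r|]. rewrite comp_assoc, Hf. exact IH. }
  apply (colimit_desc Ht (t := f)). intros i j [u Hu]. simpl.
  apply (from_base_epi (n:=i)). unfold coslice_hom in Hu.
  rewrite <- comp_assoc, Hu, !Hbase. reflexivity.
Qed.

Lemma chain_lift_stages (x z : C) (n : Hom x z) (h : Hom L z) (g : Hom (M 0) x) :
  Mono n -> comp n g = comp h (leg t 0) ->
  forall k, exists d : Hom (M k) x, comp n d = comp h (leg t k).
Proof.
  intros Hn Hg k. induction k as [|k [d Hd]]; [exists g; exact Hg|].
  destruct (kq_universal (chain_kq k) (f := d)) as [d' Hd'].
  - intros a u v Ha E. apply Hn.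
    rewrite !comp_assoc, Hd, <- (chain_leg_step k), <- !comp_assoc.
    rewrite (kq_identifies (chain_kq k) Ha E). reflexivity.
  - exists d'. apply (kq_epi (chain_kq k)).
    rewrite <- comp_assoc, Hd', Hd, <- comp_assoc, chain_leg_step. reflexivity.
Qed.

Lemma chain_leg_base_strong_epi : StrongEpi (leg t 0).
Proof.
  split.
  - intros z f1 f2 E. apply (colimit_hom_ext Ht). intro n.
    apply (from_base_epi (n:=n)). rewrite <- !comp_assoc, chain_leg_base. exact E.
  - intros x z g n h Hn Hg.
    pose proof (chain_lift_stages Hn Hg) as Hstage.
    pose (d := fun k => proj1_sig (constructive_indefinite_description _ (Hstage k))).
    assert (Hd : forall k, comp n (d k) = comp h (leg t k)).
    { intro k. exact (proj2_sig (constructive_indefinite_description _ (Hstage k))). }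
    destruct (chain_desc (f := d)) as [delta Hdelta].
    { intro k. apply Hn.
      rewrite comp_assoc, !Hd, <- comp_assoc, chain_leg_step. reflexivity. }
    exists delta. split.
    + apply Hn. rewrite Hdelta, Hd. exact (eq_sym Hg).
    + apply (colimit_hom_ext Ht). intro k. rewrite <- comp_assoc, Hdelta. apply Hd.
Qed.

Lemma chain_mono_factor : exists mL : Hom L b, comp mL (leg t 0) = mm 0 /\ Mono mL.
Proof.
  destruct (chain_desc (f := mm)) as [mL HmL].
  { intro n. exact (kq_factor (chain_kq n)). }
  exists mL. split; [apply HmL|].
  apply (lfp_mono HC). intros a g g' Ha E.
  destruct (finpres_factor2 Ha chain_filtered Ht g g') as [N [h1 [h2 [<- <-]]]].
  rewrite !comp_assoc, HmL in E.
  rewrite <- (chain_leg_step N), <- !comp_assoc, (kq_identifies (chain_kq N) Ha E).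
  reflexivity.
Qed.

End KernelChain.

Section Tower.
Universes o h.
Context (C : Category@{o h}) (b : C)
  (step : forall y : C, Hom y b -> {y' : C & (Hom y y' * Hom y' b)%type})
  (Q : C) (q : Hom Q b).

Fixpoint tower (n : nat) : {y : C & Hom y b} :=
  match n with
  | 0 => existT _ Q q
  | S n => let s := step (projT2 (tower n)) in existT _ (projT1 s) (snd (projT2 s))
  end.

End Tower.

Section Images.
Universes o h h'.
Constraint h < h'.
Context (C : Category@{o h}) (HC : LocallyFinPres@{o h h'} C).

Lemma lfp_strong_epi_mono_factorization (Q b : C) (q : Hom Q b) :
  exists L (e : Hom Q L) (m : Hom L b), StrongEpi e /\ Mono m /\ comp m e = q.
Proof.
  assert (Hstep : forall y (m : Hom y b),
             {s : {y' : C & (Hom y y' * Hom y' b)%type}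
             | FpKernelQuotient@{o h h'} m (fst (projT2 s)) (snd (projT2 s))}).
  { intros y m. apply constructive_indefinite_description.
    destruct (fp_kernel_quotient_exists HC m) as [y' [c [m' H]]].
    exists (existT _ y' (c, m')). exact H. }
  pose (step := fun y m => proj1_sig (Hstep y m)).
  pose (M := fun n => projT1 (tower step q n)).
  pose (mm := fun n => projT2 (tower step q n) : Hom (M n) b).
  pose (cc := fun n => fst (projT2 (step _ (mm n))) : Hom (M n) (M (S n))).
  assert (Hkq : forall n, FpKernelQuotient@{o h h'} (mm n) (cc n) (mm (S n)))
    by (intro n; exact (proj2_sig (Hstep _ (mm n)))).
  destruct (proj1 HC _ (ChainDiagram cc)) as [L [t Ht]].
  destruct (chain_mono_factor HC Hkq Ht) as [m [Hm Hmono]].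
  exists L, (leg t 0), m.
  split; [exact (chain_leg_base_strong_epi Hkq Ht)|split; assumption].
Qed.

Lemma fingen_of_strong_epi (Q L : C) (e : Hom Q L) :
  FinPres@{o h h'} Q -> StrongEpi e -> FinGen@{o h h'} L.
Proof.
  intros HQ [_ Hlift] J D HF HM c l Hl.
  pose proof (filtered_mono_colimit_legs_mono HC HF HM Hl) as Hlegs.
  apply hom_colimit_of_mono_legs; [exact HF|exact Hlegs|].
  intro f. destruct (finpres_factor HQ HF Hl (comp f e)) as [j [z Hz]].
  destruct (Hlift _ _ z (leg l j) f (Hlegs j) Hz) as [d [_ Hd]].
  exists j, d. exact Hd.
Qed.

End Images.

Section ImageUnion.
Universes o h.
Context (C : Category@{o h}) (K : Category@{h h}) (E : Functor K C) (a : C)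
  (p : Cocone E a) (Mi : K -> C) (ei : forall k, Hom (E k) (Mi k))
  (mi : forall k, Hom (Mi k) a).
Hypotheses (HK : Filtered K) (Hp : IsColimit p)
  (Hfac : forall k, comp (mi k) (ei k) = leg p k)
  (Hei : forall k, StrongEpi (ei k)) (Hmi : forall k, Mono (mi k)).

Definition slice_hom (k k' : K) (f : Hom (Mi k) (Mi k')) : Prop := comp (mi k') f = mi k.
Arguments slice_hom : clear implicits.

Lemma slice_hom_id k : slice_hom k k (idm (Mi k)).
Proof. apply comp_id_r. Qed.

Lemma slice_hom_comp k k' k'' (f : Hom (Mi k') (Mi k'')) (g : Hom (Mi k) (Mi k')) :
  slice_hom k' k'' f -> slice_hom k k' g -> slice_hom k k'' (comp f g).
Proof. unfold slice_hom. intros Hf Hg. rewrite comp_assoc, Hf. exact Hg. Qed.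

Definition UnionCat : Category :=
  InducedCat C (Ob K) Mi slice_hom slice_hom_id slice_hom_comp.
Definition UnionDiagram : Functor UnionCat C :=
  InducedFunctor C (Ob K) Mi slice_hom slice_hom_id slice_hom_comp.
Definition union_cocone : Cocone UnionDiagram a :=
  mk_cocone (D := UnionDiagram) mi (fun k k' f => proj2_sig f).

Lemma union_transition k k' (u : Hom k k') :
  exists f : Hom (Mi k) (Mi k'),
    slice_hom k k' f /\ comp f (ei k) = comp (ei k') (fmap E u).
Proof.
  destruct (proj2 (Hei k) _ _ (comp (ei k') (fmap E u)) (mi k') (mi k) (Hmi (k:=k')))
    as [d [Hd1 Hd2]].
  - rewrite comp_assoc, !Hfac. apply leg_natural.
  - exists d. split; assumption.
Qed.

Lemma union_filtered : Filtered UnionCat.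
Proof.
  apply induced_filtered.
  - exact (proj1 HK).
  - intros k k'. destruct (filtered_bound HK k k') as [m [u [v _]]].
    destruct (union_transition u) as [f [Hf _]].
    destruct (union_transition v) as [g [Hg _]].
    exists m, f, g. split; assumption.
  - intros k k' f g Hf Hg. apply (Hmi (k:=k')). unfold slice_hom in *.
    rewrite Hf, Hg. reflexivity.
Qed.

Lemma union_mono_diagram : MonoDiagram UnionDiagram.
Proof.
  intros k k' [f Hf]. simpl. apply (mono_of_comp_mono (g := mi k')).
  unfold slice_hom in Hf. rewrite Hf. apply Hmi.
Qed.

Lemma union_is_colimit : IsColimit union_cocone.
Proof.
  intros y tau. split.
  - destruct (colimit_desc Hp (t := fun k => comp (leg tau k : Hom (Mi k) y) (ei k)))
      as [w Hw].
    { intros k k' u. destruct (union_transition u) as [f [Hf Hfe]].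
      rewrite <- comp_assoc, <- Hfe, comp_assoc.
      f_equal. exact (leg_natural tau (exist _ f Hf : Hom (C:=UnionCat) k k')). }
    exists w. intro k. apply (proj1 (Hei k)).
    rewrite <- comp_assoc. simpl. rewrite Hfac. apply Hw.
  - intros m1 m2 H1 H2. apply (colimit_hom_ext Hp). intro k.
    rewrite <- Hfac, !comp_assoc. simpl in H1, H2. rewrite H1, H2. reflexivity.
Qed.

End ImageUnion.

Lemma lfp_fg_subobject_union@{o h h'| h < h' +} (C : Category@{o h}) :
  LocallyFinPres@{o h h'} C -> forall a : C,
  exists (J : Category@{h h}) (D : Functor J C) (l : Cocone D a),
    Filtered J /\ MonoDiagram D /\ IsColimit l /\
    (forall j, FinGen@{o h h'} (D j)) /\ (forall j, Mono (leg l j)).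
Proof.
  intros HC a. destruct (proj2 (proj2 HC) a) as [K [E [HK [Hfp [p Hp]]]]].
  assert (Himg : forall k, {s : {L : C & (Hom (E k) L * Hom L a)%type}
                 | StrongEpi (fst (projT2 s)) /\ Mono (snd (projT2 s)) /\
                   comp (snd (projT2 s)) (fst (projT2 s)) = leg p k}).
  { intro k. apply constructive_indefinite_description.
    destruct (lfp_strong_epi_mono_factorization HC (leg p k)) as [L [e [m H]]].
    exists (existT _ L (e, m)). exact H. }
  pose (Mi := fun k => projT1 (proj1_sig (Himg k))).
  pose (ei := fun k => fst (projT2 (proj1_sig (Himg k))) : Hom (E k) (Mi k)).
  pose (mi := fun k => snd (projT2 (proj1_sig (Himg k))) : Hom (Mi k) a).
  assert (Hei : forall k, StrongEpi (ei k)) by (intro k; apply (proj2_sig (Himg k))).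
  assert (Hmi : forall k, Mono (mi k)) by (intro k; apply (proj2_sig (Himg k))).
  assert (Hfac : forall k, comp (mi k) (ei k) = leg p k)
    by (intro k; apply (proj2_sig (Himg k))).
  exists (UnionCat mi), (UnionDiagram mi), (union_cocone mi).
  split; [exact (union_filtered HK Hfac Hei Hmi)|].
  split; [exact (union_mono_diagram Hmi)|].
  split; [exact (union_is_colimit Hp Hfac Hei Hmi)|].
  split; [|exact Hmi].
  intro k. exact (fingen_of_strong_epi HC (Hfp k) (Hei k)).
Qed.

Lemma mono_cocone_legs_agree (J C : Category) (E : Functor J C) (b : C)
    (k : Cocone E b) :
  Filtered J -> (forall j, Mono (leg k j)) ->
  forall y (l : Cocone E y) (x : C) j j' (z : Hom x (E j)) (z' : Hom x (E j')),
  comp (leg k j) z = comp (leg k j') z' -> comp (leg l j) z = comp (leg l j') z'.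
Proof.
  intros HF Hmono y l x j j' z z' Ez.
  destruct (filtered_bound HF j j') as [m [u [v _]]].
  assert (Euv : comp (fmap E u) z = comp (fmap E v) z').
  { apply (Hmono m). rewrite !comp_assoc, !leg_natural. exact Ez. }
  rewrite <- (leg_natural l u), <- (leg_natural l v), <- !comp_assoc, Euv.
  reflexivity.
Qed.

Lemma is_colimit_of_mono_legs@{o h h'| h < h' +} (C : Category@{o h}) :
  LocallyFinPres@{o h h'} C ->
  forall (J : Category@{h h}) (E : Functor J C) (b : C) (k : Cocone E b),
  Filtered J -> (forall j, Mono (leg k j)) ->
  (forall (x : C) (q : Hom x b), FinPres@{o h h'} x ->
     exists j (g : Hom x (E j)), comp (leg k j) g = q) ->
  IsColimit k.
Proof.
  intros HC J E b k HF Hmono Hcover y l.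
  pose proof (mono_cocone_legs_agree HF Hmono l) as Hagree.
  split.
  - destruct (proj2 (proj2 HC) b) as [K [G [HK [Hfp [r Hr]]]]].
    assert (Hsel : forall kk, {p : {j : J & Hom (G kk) (E j)}
                              | comp (leg k (projT1 p)) (projT2 p) = leg r kk}).
    { intro kk. apply constructive_indefinite_description.
      destruct (Hcover _ (leg r kk) (Hfp kk)) as [j [g Hg]].
      exists (existT _ j g). exact Hg. }
    pose (jj := fun kk => projT1 (proj1_sig (Hsel kk))).
    pose (g := fun kk => projT2 (proj1_sig (Hsel kk)) : Hom (G kk) (E (jj kk))).
    assert (Hg : forall kk, comp (leg k (jj kk)) (g kk) = leg r kk)
      by (intro kk; exact (proj2_sig (Hsel kk))).
    destruct (colimit_desc Hr (t := fun kk => comp (leg l (jj kk)) (g kk))) as [w Hw].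
    { intros kk kk' u. rewrite <- comp_assoc. apply Hagree.
      rewrite comp_assoc, Hg, Hg. apply leg_natural. }
    exists w. intro j. apply (lfp_hom_ext HC). intros x t Hx.
    destruct (finpres_factor Hx HK Hr (comp (leg k j) t)) as [kk [v Hv]].
    rewrite <- comp_assoc, <- Hv, comp_assoc, Hw, <- comp_assoc.
    apply Hagree. rewrite comp_assoc, Hg. exact Hv.
  - intros m1 m2 H1 H2. apply (lfp_hom_ext HC). intros x q Hx.
    destruct (Hcover x q Hx) as [j [g <-]].
    rewrite !comp_assoc, H1, H2. reflexivity.
Qed.

Lemma preserves_of_bounded@{o1 o2 h h'| h < h' +}
    (A : Category@{o1 h}) (B : Category@{o2 h}) (F : Functor A B) :
  LocallyFinPres@{o1 h h'} A -> LocallyFinPres@{o2 h h'} B ->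
  PreservesMonos F -> FinitelyBounded@{o1 o2 h h'} F ->
  forall (J : Category@{h h}) (D : Functor J A),
    Filtered J -> MonoDiagram D -> PreservesColimitsOf D F.
Proof.
  intros HA HB HFm Hbd J D HF HM c l Hl.
  apply (is_colimit_of_mono_legs HB); [exact HF| |].
  - intro j. apply HFm. exact (filtered_mono_colimit_legs_mono HA HF HM Hl (j:=j)).
  - intros x q Hx.
    destruct (lfp_strong_epi_mono_factorization HB q) as [L [e [m [He [Hm Hq]]]]].
    destruct (Hbd c L m Hm (fingen_of_strong_epi HB Hx He)) as [N [n [_ [HN [g Hg]]]]].
    destruct (fingen_factor HN HF HM Hl n) as [j [f Hf]].
    exists j, (comp (fmap F f) (comp g e)). simpl.
    rewrite comp_assoc, <- fmap_comp, Hf, comp_assoc, <- Hg. exact Hq.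
Qed.

Lemma bounded_of_preserves@{o1 o2 h h'| h < h' +}
    (A : Category@{o1 h}) (B : Category@{o2 h}) (F : Functor A B) :
  LocallyFinPres@{o1 h h'} A -> PreservesMonos F ->
  (forall (J : Category@{h h}) (D : Functor J A),
     Filtered J -> MonoDiagram D -> PreservesColimitsOf D F) ->
  FinitelyBounded@{o1 o2 h h'} F.
Proof.
  intros HA HFm Hpres a M0 m0 Hm0 HM0.
  destruct (lfp_fg_subobject_union HA a) as [J [D [l [HF [HM [Hl [Hfg Hlm]]]]]]].
  assert (HFD : MonoDiagram (FComp F D)) by (intros j k u; apply HFm, HM).
  destruct (fingen_factor HM0 HF HFD (Hpres J D HF HM a l Hl) m0) as [j [g Hg]].
  exists (D j), (leg l j). split; [apply Hlm|split; [apply Hfg|]].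
  exists g. symmetry. exact Hg.
Qed.

Theorem propositionP@{o1 o2 h h'| h < h' +}
    (A : Category@{o1 h}) (B : Category@{o2 h}) (F : Functor A B) :
  LocallyFinPres@{o1 h h'} A -> LocallyFinPres@{o2 h h'} B ->
  PreservesMonos F ->
  (FinitelyBounded@{o1 o2 h h'} F <->
   forall (J : Category@{h h}) (D : Functor J A),
     Filtered J -> MonoDiagram D -> PreservesColimitsOf D F).
Proof.
  intros HA HB HFm. split.
  - exact (preserves_of_bounded HA HB HFm).
  - exact (bounded_of_preserves HA HFm).
Qed.
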